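(* Let $\bar{G}$ be a finite subgroup of $\mathrm{Aut}(\mathbb{P}^2)$ with $\bar{G}\cong\mathrm{S}_4$ or $\bar{G}\cong\mathrm{A}_4$. Then either there is a $\bar{G}$-invariant point in $\mathbb{P}^2$, or there is at most one $\bar{G}$-orbit in $\mathbb{P}^2$ of length $3$. *)

From HB Require Import structures.
From mathcomp Require Import all_boot all_order all_algebra all_fingroup all_solvable.
From mathcomp Require Import complex.
From mathcomp Require Import Rstruct.
From Stdlib Require Import Reals.

Set Implicit Arguments.
Unset Strict Implicit.
Unset Printing Implicit Defensive.

Import GRing.Theory.
Local Open Scope ring_scope.

Definition C : Type := complex Rdefinitions.R.

(* Vectors of C^3 (row vectors); a point of P^2 is the class of a nonzero
   vector under proportionality. *)
Definition proj_eq (u v : 'rV[C]_3) : Prop := exists c : C, c != 0 /\ v = c *: u.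

Definition normalize (v : 'rV[C]_3) : 'rV[C]_3 :=
  if [pick i : 'I_3 | v 0 i != 0] is Some i then (v 0 i)^-1 *: v else v.

(* The orbit of the point [v] under the projective action of G given by
   g . [v] = [v *m rho g], as a duplicate-free list of normalized representatives. *)
Definition porbit (gT : finGroupType) (G : {group gT}) (rho : gT -> 'M[C]_3)
  (v : 'rV[C]_3) : seq 'rV[C]_3 :=
  undup [seq normalize (v *m rho g) | g <- enum G].

Definition porbit_len (gT : finGroupType) (G : {group gT}) (rho : gT -> 'M[C]_3)
  (v : 'rV[C]_3) : nat := size (porbit G rho v).

From Pilot Require Import Defs.
From HB Require Import structures.
From mathcomp Require Import all_boot all_order all_algebra all_fingroup all_solvable.
From mathcomp Require Import complex.
From mathcomp Require Import Rstruct.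

(* The double transpositions of S_4 lie in A_4 and form, with 1, a normal Klein four-group;
   so G contains commuting involutions a, b such that {a, b, ab} is stable under conjugation.
   On an orbit of length 3, a and b act as commuting involutions, hence have a common fixed
   point, and by normality every point of the orbit is fixed by a and b.  Lifts A, B of a, b
   commute and have scalar squares, and since none of A, B, AB is scalar, at least three of the
   four joint eigenspaces of (A, B) in C^3 are nonzero: the points fixed by a and b are at most
   three.  An orbit of length 3 therefore consists of all of them, so there is only one such
   orbit (the second alternative of the theorem always holds). *)

Set Implicit Arguments.
Unset Strict Implicit.
Unset Printing Implicit Defensive.

Import GRing.Theory Num.Theory.

Definition o0 : 'I_4 := @Ordinal 4 0 isT.
Definition o1 : 'I_4 := @Ordinal 4 1 isT.
Definition o2 : 'I_4 := @Ordinal 4 2 isT.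
Definition o3 : 'I_4 := @Ordinal 4 3 isT.

Lemma ord4P (i : 'I_4) : [\/ i = o0, i = o1, i = o2 | i = o3].
Proof.
by case: i => [[|[|[|[|//]]]] ?]; [apply: Or41|apply: Or42|apply: Or43|apply: Or44];
  apply: val_inj.
Qed.

Section FixedPointFreeInvolutions.
Variable T : finType.

Lemma fpf_involution_eq (x y : {perm T}) i0 : #|T| <= 4 ->
  involutive x -> involutive y -> (forall i, x i != i) -> (forall i, y i != i) ->
  x i0 = y i0 -> x = y.
Proof.
move=> T4 xK yK x_fpf y_fpf xy0; apply/permP => i.
have [-> //|i_neq_i0] := eqVneq i i0.
have [->|i_neq_xi0] := eqVneq i (x i0); first by rewrite xK xy0 yK.
(* Away from [i0] and [x i0], both [x i] and [y i] avoid three points of [T]. *)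
have avoid (z : {perm T}) : involutive z -> (forall i, z i != i) -> z i0 = x i0 ->
    z i \notin [:: i; i0; x i0].
  move=> zK z_fpf zi0; rewrite !inE negb_or z_fpf /= negb_or.
  by rewrite -{1}[i0]zK zi0 -{2}zi0 !(inj_eq perm_inj) i_neq_xi0.
apply/eqP/negPn/negP => xy_i.
have: uniq [:: y i; x i; i; i0; x i0].
  rewrite /= in_cons negb_or eq_sym xy_i !avoid //.
  by rewrite !inE negb_or i_neq_i0 i_neq_xi0 eq_sym x_fpf.
move/card_uniqP => card5; have := max_card (mem [:: y i; x i; i; i0; x i0]).
by rewrite card5 => /leq_trans/(_ T4).
Qed.

End FixedPointFreeInvolutions.

Section KleinFourInS4.
Local Open Scope group_scope.

Definition dtr1 : {perm 'I_4} := tperm o0 o1 * tperm o2 o3.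
Definition dtr2 : {perm 'I_4} := tperm o0 o2 * tperm o1 o3.
Definition dtr3 : {perm 'I_4} := tperm o0 o3 * tperm o1 o2.

Lemma dtr1E i : dtr1 i = nth o0 [:: o1; o0; o3; o2] i.
Proof. by case: (ord4P i) => ->; rewrite permM !permE. Qed.
Lemma dtr2E i : dtr2 i = nth o0 [:: o2; o3; o0; o1] i.
Proof. by case: (ord4P i) => ->; rewrite permM !permE. Qed.
Lemma dtr3E i : dtr3 i = nth o0 [:: o3; o2; o1; o0] i.
Proof. by case: (ord4P i) => ->; rewrite permM !permE. Qed.

Lemma dtr12 : dtr1 * dtr2 = dtr3.
Proof. by apply/permP => i; rewrite permM dtr1E dtr2E dtr3E; case: (ord4P i) => ->. Qed.
Lemma dtr21 : dtr2 * dtr1 = dtr3.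
Proof. by apply/permP => i; rewrite permM dtr1E dtr2E dtr3E; case: (ord4P i) => ->. Qed.

Lemma dtr_fpf_involution x : x \in [:: dtr1; dtr2; dtr3] ->
  involutive x /\ forall i, x i != i.
Proof.
by rewrite !inE => /or3P [] /eqP -> ; split=> i;
  rewrite ?dtr1E ?dtr2E ?dtr3E; case: (ord4P i) => ->.
Qed.

Lemma fpf_involution_dtr (x : {perm 'I_4}) : involutive x -> (forall i, x i != i) ->
  x \in [:: dtr1; dtr2; dtr3].
Proof.
move=> xK x_fpf; have card4 : #|'I_4| <= 4 by rewrite card_ord.
have eq_dtr y : y \in [:: dtr1; dtr2; dtr3] -> x o0 = y o0 -> x = y.
  by case/dtr_fpf_involution=> yK y_fpf; apply: fpf_involution_eq.
have := x_fpf o0; case: (ord4P (x o0)) => x0; rewrite x0 ?eqxx // => _.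
- by rewrite (eq_dtr dtr1) ?inE ?eqxx // dtr1E.
- by rewrite (eq_dtr dtr2) ?inE ?eqxx ?orbT // dtr2E.
- by rewrite (eq_dtr dtr3) ?inE ?eqxx ?orbT // dtr3E.
Qed.

Lemma dtr_conjg x s : x \in [:: dtr1; dtr2; dtr3] -> x ^ s \in [:: dtr1; dtr2; dtr3].
Proof.
case/dtr_fpf_involution=> xK x_fpf; apply: fpf_involution_dtr => i;
  have [j ->] : exists j, i = s j by exists (s^-1 i); rewrite permKV.
  by rewrite !permJ xK.
by rewrite permJ (inj_eq perm_inj).
Qed.

Lemma dtr_Alt : (dtr1 \in 'Alt_('I_4)) && (dtr2 \in 'Alt_('I_4)).
Proof. by rewrite !Alt_even !odd_permM !odd_tperm. Qed.

End KleinFourInS4.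

Section KleinFour.
Local Open Scope group_scope.
Variables (gT : finGroupType) (G : {group gT}).

Definition klein_triple (a b : gT) := [:: a; b; a * b].

Lemma klein_of_isog (H : {group {perm 'I_4}}) : dtr1 \in H -> dtr2 \in H -> H \isog G ->
  exists a b, [/\ a \in G, b \in G, a * a = 1, b * b = 1 & commute a b] /\
    [/\ a != 1, b != 1, a * b != 1 &
        {in G & klein_triple a b, forall g k, k ^ g \in klein_triple a b}].
Proof.
move=> H1 H2 /isogP [f f_inj fH]; have H3 : dtr3 \in H by rewrite -dtr12 groupM.
have triple_im : klein_triple (f dtr1) (f dtr2) = map f [:: dtr1; dtr2; dtr3].
  by rewrite /klein_triple /= -morphM ?dtr12.
have dtrH y : y \in [:: dtr1; dtr2; dtr3] -> y \in H.
  by rewrite !inE => /or3P [] /eqP ->.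
have sqr1 y : y \in [:: dtr1; dtr2; dtr3] -> f y * f y = 1.
  move=> y_dtr; have [yK _] := dtr_fpf_involution y_dtr.
  by rewrite -morphM ?dtrH // -(morph1 f); congr (f _); apply/permP => i; rewrite permM yK perm1.
have neq1 y : y \in [:: dtr1; dtr2; dtr3] -> f y != 1.
  move=> y_dtr; rewrite morph_injm_eq1 ?dtrH //.
  by have [_ /(_ o0)] := dtr_fpf_involution y_dtr; apply: contraNneq => ->; rewrite perm1.
have [d1 d2 d3] : [/\ dtr1 \in [:: dtr1; dtr2; dtr3], dtr2 \in [:: dtr1; dtr2; dtr3]
  & dtr3 \in [:: dtr1; dtr2; dtr3]] by rewrite !inE !eqxx !orbT.
exists (f dtr1), (f dtr2); rewrite -fH; split.
  split; rewrite ?mem_morphim ?sqr1 //.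
  by rewrite /commute -!morphM // dtr12 dtr21.
split; rewrite ?neq1 -?morphM ?dtr12 ?neq1 //.
move=> _ k /morphimP [s _ sH ->]; rewrite triple_im => /mapP [x x_dtr ->].
by rewrite -morphJ // ?dtrH // map_f ?dtr_conjg.
Qed.

Lemma klein_four_normal :
  (G \isog 'Sym_('I_4)) \/ (G \isog 'Alt_('I_4)) ->
  exists a b, [/\ a \in G, b \in G, a * a = 1, b * b = 1 & commute a b] /\
    [/\ a != 1, b != 1, a * b != 1 &
        {in G & klein_triple a b, forall g k, k ^ g \in klein_triple a b}].
Proof.
have [A1 A2] := andP dtr_Alt.
case=> isoG; [apply: (@klein_of_isog 'Sym_('I_4)) | apply: (@klein_of_isog 'Alt_('I_4))];
  rewrite 1?isog_sym //; exact: in_setT.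
Qed.

End KleinFour.

Section InvolutionsOnThreePoints.
Variables (T : eqType) (s : seq T).
Hypotheses (s_uniq : uniq s) (size_s : size s = 3).

Lemma uniq4_notin_subset (a b c d : T) :
  uniq [:: a; b; c; d] -> ~ {subset [:: a; b; c; d] <= s}.
Proof. by move=> abcd sub; have := uniq_leq_size abcd sub; rewrite size_s. Qed.

Lemma mem_outside_pair x y : exists2 z, z \in s & z \notin [:: x; y].
Proof.
apply/allPn; apply/negP => /allP sub.
by have := uniq_leq_size s_uniq sub; rewrite size_s.
Qed.

Lemma involution_fixed_point (f : T -> T) :
  {in s, forall x, f x \in s} -> {in s, involutive f} -> exists2 x, x \in s & f x = x.
Proof.
move=> fs fK; have f_inj := can_in_inj fK.
have [x xs] : exists x, x \in s.
  by case E: s => [|x ?]; [move: size_s; rewrite E | exists x; rewrite mem_head].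
have [fx | fx_x] := eqVneq (f x) x; first by exists x.
have [z zs] := mem_outside_pair x (f x); rewrite !inE negb_or => /andP [zx zfx].
exists z => //; apply/eqP/negPn/negP => fz_z.
apply: (@uniq4_notin_subset x (f x) z (f z)).
  rewrite /= !inE !negb_or eq_sym fx_x eq_sym zx (eq_sym (f x)) zfx (eq_sym z) fz_z /=.
  by rewrite -{1}(fK x xs) !(inj_in_eq f_inj) ?fs // (eq_sym (f x)) zfx eq_sym zx.
by move=> t; rewrite !inE => /or4P [] /eqP ->; rewrite ?fs.
Qed.

Lemma commuting_involutions_fixed_point (f g : T -> T) :
  {in s, forall x, f x \in s} -> {in s, involutive f} ->
  {in s, forall x, g x \in s} -> {in s, involutive g} ->
  {in s, forall x, f (g x) = g (f x)} ->
  exists2 x, x \in s & f x = x /\ g x = x.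
Proof.
move=> fs fK gs gK fg; have f_inj := can_in_inj fK.
have [x xs fx] := involution_fixed_point fs fK.
have [gx | gx_x] := eqVneq (g x) x; first by exists x.
have fgx : f (g x) = g x by rewrite fg // fx.
suff f_id : {in s, forall z, f z = z}.
  by have [w ws gw] := involution_fixed_point gs gK; exists w; rewrite ?f_id.
move=> z zs; have [zx | z_x] := eqVneq z x; first by rewrite zx fx.
have [zgx | z_gx] := eqVneq z (g x); first by rewrite zgx fgx.
apply/eqP/negPn/negP => fz_z; apply: (@uniq4_notin_subset x (g x) z (f z)).
  rewrite /= !inE !negb_or eq_sym gx_x (eq_sym x) z_x (eq_sym (g x)) z_gx (eq_sym z) fz_z /=.
  by rewrite -{1}fx -fgx !(inj_in_eq f_inj) ?gs // (eq_sym x) z_x (eq_sym (g x)) z_gx.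
by move=> t; rewrite !inE => /or4P [] /eqP ->; rewrite ?fs ?gs.
Qed.

End InvolutionsOnThreePoints.

Local Open Scope ring_scope.

Lemma sum_ord4 (V : nmodType) (f : 'I_4 -> V) : \sum_i f i = f o0 + f o1 + f o2 + f o3.
Proof.
by rewrite !big_ord_recl big_ord0 addr0 !addrA; congr (_ + _ + _ + _); congr f; apply: val_inj.
Qed.

Section FieldMatrices.
Variable F : fieldType.

Lemma row_dependent m n (v : 'I_m -> 'rV[F]_n) : (n < m)%N ->
  exists2 c : 'rV_m, c != 0 & \sum_i c 0 i *: v i = 0.
Proof.
move=> n_lt_m; pose M := \matrix_i v i.
have : kermx M != 0.
  by rewrite kermx_eq0 /row_free neq_ltn (leq_ltn_trans (rank_leq_col M)).
case/rowV0Pn=> c /sub_kermxP cM c_neq0; exists c => //.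
by rewrite -[RHS]cM mulmx_sum_row; apply: eq_bigr => i _; rewrite rowK.
Qed.

Lemma dependence_coef_eq0 m n (v : 'I_m -> 'rV[F]_n) (c : 'rV_m) (M : 'M_n) d k :
  \sum_i c 0 i *: v i = 0 -> (forall i, v i *m M = d i *: v i) ->
  (forall i, i != k -> d i = 0) -> d k != 0 -> v k != 0 -> c 0 k = 0.
Proof.
move=> cv0 vM d0 dk_neq0 vk_neq0.
have : \sum_i (c 0 i * d i) *: v i = 0.
  have := congr1 (mulmx^~ M) cv0; rewrite /= mul0mx mulmx_suml => e.
  rewrite -[RHS]e; apply: eq_bigr => i _.
  by rewrite -scalemxAl vM scalerA.
rewrite (bigD1 k) //= big1 => [|i /d0 ->]; last by rewrite mulr0 scale0r.
rewrite addr0 => /eqP; rewrite scaler_eq0 (negbTE vk_neq0) mulf_eq0 (negbTE dk_neq0).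
by rewrite !orbF => /eqP.
Qed.

Lemma eigenvalue_sqr n (M : 'M[F]_n) r (u : 'rV_n) x :
  M *m M = r%:M -> u != 0 -> u *m M = x *: u -> x ^+ 2 = r.
Proof.
move=> M2 u_neq0 uM; have := congr1 (mulmx u) M2.
rewrite mulmxA uM -scalemxAl uM scalerA mul_mx_scalar -expr2 => /eqP.
by rewrite -subr_eq0 -scalerBl scaler_eq0 (negbTE u_neq0) orbF subr_eq0 => /eqP.
Qed.

Lemma commute_of_scalar_commute n (A B : 'M[F]_n) c (u : 'rV_n) x y :
  A *m B = c *: (B *m A) -> u != 0 -> u *m A = x *: u -> u *m B = y *: u ->
  x * y != 0 -> A *m B = B *m A.
Proof.
move=> AB u_neq0 uA uB xy_neq0; suff c1 : c = 1 by rewrite AB c1 scale1r.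
have := congr1 (mulmx u) AB; rewrite -scalemxAr !mulmxA uA uB -!scalemxAl uA uB.
rewrite !scalerA mulrC => /eqP; rewrite -subr_eq0 -scalerBl scaler_eq0 (negbTE u_neq0).
rewrite orbF -mulrA -{1}[y * x]mul1r -mulrBl mulf_eq0 [y * x]mulrC (negbTE xy_neq0).
by rewrite orbF subr_eq0 eq_sym => /eqP.
Qed.

Lemma sqr_neq0 (z r : F) : z ^+ 2 = r -> r != 0 -> z != 0.
Proof. by move=> <-; rewrite expf_eq0. Qed.

Lemma sqr_eq_neq (z z' : F) : z ^+ 2 = z' ^+ 2 -> z != z' -> z + z' = 0.
Proof.
by move/eqP; rewrite eqf_sqr => /orP [/eqP -> | /eqP ->]; rewrite ?eqxx ?addNr.
Qed.

End FieldMatrices.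

Section CommutingSquareRootsOfScalars.
Variables (F : fieldType) (n : nat) (A B : 'M[F]_n) (s t : F).
Hypothesis two_neq0 : 2%:R != 0 :> F.
Hypotheses (AB_comm : A *m B = B *m A) (A2 : A *m A = s%:M) (B2 : B *m B = t%:M).
Hypotheses (s_neq0 : s != 0) (t_neq0 : t != 0).

Definition joint_eigenvector (u : 'rV[F]_n) x y :=
  [/\ u != 0, u *m A = x *: u & u *m B = y *: u].

Lemma joint_eigenvalue_sqr u x y : joint_eigenvector u x y -> x ^+ 2 = s /\ y ^+ 2 = t.
Proof.
case=> u_neq0 uA uB.
by split; [exact: eigenvalue_sqr A2 u_neq0 uA | exact: eigenvalue_sqr B2 u_neq0 uB].
Qed.

Lemma addrr_neq0 (z : F) : z != 0 -> z + z != 0.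
Proof. by move=> z_neq0; rewrite -mulr2n -mulr_natl mulf_neq0. Qed.

(* [joint_proj x y] multiplies the joint eigenvectors for [(x, y)] by [(x + x) * (y + y)] and
   kills those for [(- x, _)] and [(_, - y)]; its rows are joint eigenvectors for [(x, y)]. *)
Definition joint_proj x y := (A + x%:M) *m (B + y%:M).

Lemma mul_joint_proj (u : 'rV_n) a b x y : u *m A = a *: u -> u *m B = b *: u ->
  u *m joint_proj x y = ((a + x) * (b + y)) *: u.
Proof.
move=> uA uB; rewrite /joint_proj mulmxA [u *m (A + _)]mulmxDr mul_mx_scalar uA -scalerDl.
by rewrite -scalemxAl mulmxDr mul_mx_scalar uB -scalerDl scalerA.
Qed.

Lemma joint_projA x y : x ^+ 2 = s -> joint_proj x y *m A = x *: joint_proj x y.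
Proof.
move=> x2; have BA : (B + y%:M) *m A = A *m (B + y%:M).
  by rewrite mulmxDl mulmxDr -AB_comm mul_scalar_mx mul_mx_scalar.
rewrite /joint_proj -mulmxA BA mulmxA mulmxDl A2 -x2 mul_scalar_mx.
by rewrite expr2 -scale_scalar_mx addrC -scalerDr scalemxAl.
Qed.

Lemma joint_projB x y : y ^+ 2 = t -> joint_proj x y *m B = y *: joint_proj x y.
Proof.
move=> y2; rewrite /joint_proj -mulmxA [(B + _) *m B]mulmxDl B2 -y2 mul_scalar_mx.
by rewrite expr2 -scale_scalar_mx -scalerDr [_%:M + B]addrC scalemxAr.
Qed.

Lemma joint_proj_row x y : x ^+ 2 = s -> y ^+ 2 = t -> joint_proj x y != 0 ->
  exists w, joint_eigenvector w x y.
Proof.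
move=> x2 y2 P_neq0; exists (nz_row (joint_proj x y)); split; first by rewrite nz_row_eq0.
  have [D ->] := submxP (nz_row_sub (joint_proj x y)).
  by rewrite -mulmxA (joint_projA _ x2) -scalemxAr.
have [D ->] := submxP (nz_row_sub (joint_proj x y)).
by rewrite -mulmxA (joint_projB _ y2) -scalemxAr.
Qed.

Lemma joint_dependence_coef_eq0 m (u : 'I_m -> 'rV[F]_n) (x y : 'I_m -> F) (c : 'rV_m) k :
  (forall i, joint_eigenvector (u i) (x i) (y i)) ->
  (forall i, i != k -> (x i, y i) != (x k, y k)) ->
  \sum_i c 0 i *: u i = 0 -> c 0 k = 0.
Proof.
move=> u_eigen sep cu0; have [uk_neq0 _ _] := u_eigen k.
have [xk2 yk2] := joint_eigenvalue_sqr (u_eigen k).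
apply: (dependence_coef_eq0 (M := joint_proj (x k) (y k))
  (d := fun i => (x i + x k) * (y i + y k)) cu0) => //.
- by move=> i; have [_ uA uB] := u_eigen i; exact: mul_joint_proj.
- move=> i /sep; rewrite xpair_eqE negb_and.
  have [xi2 yi2] := joint_eigenvalue_sqr (u_eigen i).
  case/orP=> [x_neq | y_neq]; first by rewrite sqr_eq_neq ?mul0r // xi2.
  by rewrite [y i + _]sqr_eq_neq ?mulr0 // yi2.
by rewrite mulf_neq0 // addrr_neq0 // (sqr_neq0 xk2, sqr_neq0 yk2).
Qed.

Lemma joint_projNl a b :
  joint_proj (- a) b - joint_proj (- a) (- b) = (b *+ 2) *: (A - a%:M).
Proof.
rewrite /joint_proj -mulmxBr opprD addrACA subrr add0r !raddfN /= opprK.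
by rewrite mulmxDr mul_mx_scalar -scalerDl mulr2n.
Qed.

Lemma joint_projNr a b :
  joint_proj a (- b) - joint_proj (- a) (- b) = (a *+ 2) *: (B - b%:M).
Proof.
rewrite /joint_proj -mulmxBl opprD addrACA subrr add0r !raddfN /= opprK.
by rewrite mulmxDl mul_scalar_mx -scalerDl mulr2n.
Qed.

Lemma joint_projNlr a b :
  joint_proj (- a) b + joint_proj a (- b) = 2%:R *: (A *m B - (a * b)%:M).
Proof.
rewrite /joint_proj !mulmxDl !mulmxDr !mul_scalar_mx !mul_mx_scalar !raddfN /=.
rewrite !scaleNr !scale_scalar_mx scaler_nat mulr2n addrACA.
rewrite (addrACA (A *m B) (b *: A)) subrr addr0 (addrACA (- (a *: B))) addNr add0r.
by rewrite (addrACA (A *m B) (- _)).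
Qed.

Hypotheses (A_nscalar : forall c, A != c%:M) (B_nscalar : forall c, B != c%:M).
Hypothesis AB_nscalar : forall c, A *m B != c%:M.

Lemma other_joint_eigenvectors u a b : joint_eigenvector u a b ->
  exists x y x' y' w w', [/\ joint_eigenvector w x y, joint_eigenvector w' x' y'
    & uniq [:: (a, b); (x, y); (x', y')]].
Proof.
case/joint_eigenvalue_sqr=> a2 b2; have Na2 : (- a) ^+ 2 = s by rewrite sqrrN.
have Nb2 : (- b) ^+ 2 = t by rewrite sqrrN.
have a_neq0 := sqr_neq0 a2 s_neq0; have b_neq0 := sqr_neq0 b2 t_neq0.
have eq_opp (z : F) : z != 0 -> (z == - z) = false /\ (- z == z) = false.
  move=> z_neq0; have zNz : (z == - z) = false.
    by apply/negbTE; rewrite -addr_eq0 addrr_neq0.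
  by split; rewrite // eq_sym.
have [[aNa Naa] [bNb Nbb]] := (eq_opp a a_neq0, eq_opp b b_neq0).
have mul2_neq0 (z : F) : z != 0 -> z *+ 2 != 0 by move=> z_neq0; rewrite -mulr_natr mulf_neq0.
have nzA : (joint_proj (- a) b != 0) || (joint_proj (- a) (- b) != 0).
  rewrite -negb_and; apply: contra (A_nscalar a) => /andP [/eqP P1 /eqP P2].
  move: (joint_projNl a b); rewrite P1 P2 subrr => /esym/eqP.
  by rewrite scaler_eq0 (negbTE (mul2_neq0 b b_neq0)) subr_eq0.
have nzB : (joint_proj a (- b) != 0) || (joint_proj (- a) (- b) != 0).
  rewrite -negb_and; apply: contra (B_nscalar b) => /andP [/eqP P1 /eqP P2].
  move: (joint_projNr a b); rewrite P1 P2 subrr => /esym/eqP.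
  by rewrite scaler_eq0 (negbTE (mul2_neq0 a a_neq0)) subr_eq0.
have nzAB : (joint_proj (- a) b != 0) || (joint_proj a (- b) != 0).
  rewrite -negb_and; apply: contra (AB_nscalar (a * b)) => /andP [/eqP P1 /eqP P2].
  move: (joint_projNlr a b); rewrite P1 P2 addr0 => /esym/eqP.
  by rewrite scaler_eq0 (negbTE two_neq0) subr_eq0.
have [P1 | P1] := eqVneq (joint_proj (- a) b) 0.
  rewrite P1 eqxx /= in nzA nzAB.
  have [w w_eigen] := joint_proj_row a2 Nb2 nzAB.
  have [w' w'_eigen] := joint_proj_row Na2 Nb2 nzA.
  by exists a, (- b), (- a), (- b), w, w';
    rewrite /= !inE !xpair_eqE ?aNa ?Naa ?bNb ?Nbb ?eqxx ?andbF.
have [w w_eigen] := joint_proj_row Na2 b2 P1.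
have [P2 | P2] := eqVneq (joint_proj a (- b)) 0.
  rewrite P2 eqxx /= in nzB.
  have [w' w'_eigen] := joint_proj_row Na2 Nb2 nzB.
  by exists (- a), b, (- a), (- b), w, w';
    rewrite /= !inE !xpair_eqE ?aNa ?Naa ?bNb ?Nbb ?eqxx ?andbF.
have [w' w'_eigen] := joint_proj_row a2 Nb2 P2.
by exists (- a), b, a, (- b), w, w';
  rewrite /= !inE !xpair_eqE ?aNa ?Naa ?bNb ?Nbb ?eqxx ?andbF.
Qed.

Lemma joint_eigenvector_line p q a b : (n <= 3)%N ->
  joint_eigenvector p a b -> joint_eigenvector q a b -> exists c, q = c *: p.
Proof.
move=> n_le3 p_eigen q_eigen.
have [x [y [x' [y' [w [w' [w_eigen w'_eigen]]]]]]] := other_joint_eigenvectors p_eigen.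
rewrite /= !inE !negb_or => /and3P [/andP [ab_xy ab_x'y'] xy_x'y' _].
pose v (i : 'I_4) := [:: p; w; w'; q]`_i.
pose X (i : 'I_4) := [:: a; x; x'; a]`_i; pose Y (i : 'I_4) := [:: b; y; y'; b]`_i.
have v_eigen (i : 'I_4) : joint_eigenvector (v i) (X i) (Y i) by case: (ord4P i) => ->.
have [c c_neq0 cv0] := row_dependent v n_le3.
have [c1 c2] : c 0 o1 = 0 /\ c 0 o2 = 0.
  by split; apply: (joint_dependence_coef_eq0 v_eigen _ cv0) => i;
    case: (ord4P i) => -> //=; rewrite 1?eq_sym.
move: cv0; rewrite sum_ord4 c1 c2 !scale0r !addr0 => cpq0.
have c3_neq0 : c 0 o3 != 0.
  apply: contraNneq c_neq0 => c3; move: cpq0; rewrite c3 scale0r addr0 => /eqP.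
  have [p_neq0 _ _] := p_eigen; rewrite scaler_eq0 (negbTE p_neq0) orbF => /eqP c0.
  by apply/eqP/rowP => i; rewrite mxE; case: (ord4P i) => ->.
exists (- (c 0 o0 / c 0 o3)); apply: (scalerI c3_neq0).
rewrite scalerA mulrN mulrC divfK // scaleNr.
by apply/eqP; rewrite -addr_eq0 addrC; apply/eqP.
Qed.

Lemma four_joint_eigenvectors (u : 'I_4 -> 'rV[F]_n) (x y : 'I_4 -> F) : (n <= 3)%N ->
  (forall i, joint_eigenvector (u i) (x i) (y i)) ->
  exists i j, i != j /\ exists c, u j = c *: u i.
Proof.
move=> n_le3 u_eigen.
case: (pickP [pred ij : 'I_4 * 'I_4 | (ij.1 != ij.2) && ((x ij.1, y ij.1) == (x ij.2, y ij.2))]).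
  move=> [i j] /andP [/= i_neq_j /eqP [xij yij]]; exists i, j; split=> //.
  by apply: joint_eigenvector_line; rewrite // xij yij.
move=> sep; have [c c_neq0 cu0] := row_dependent u n_le3.
case/eqP: c_neq0; apply/rowP => k; rewrite mxE.
apply: (joint_dependence_coef_eq0 u_eigen _ cu0) => i i_neq_k.
by have := sep (i, k); rewrite /= i_neq_k => /negbT.
Qed.

End CommutingSquareRootsOfScalars.

Lemma proj_eq_refl (u : 'rV[C]_3) : proj_eq u u.
Proof. by exists 1; rewrite oner_eq0 scale1r. Qed.

Lemma proj_eq_sym (u v : 'rV[C]_3) : proj_eq u v -> proj_eq v u.
Proof.
by case=> c [c_neq0 ->]; exists c^-1; rewrite invr_eq0 scalerA mulVf // scale1r.
Qed.

Lemma proj_eq_trans (u v w : 'rV[C]_3) : proj_eq u v -> proj_eq v w -> proj_eq u w.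
Proof.
by case=> c [c_neq0 ->] [d [d_neq0 ->]]; exists (d * c); rewrite mulf_neq0 // scalerA.
Qed.

Lemma proj_eq_mulmx (u v : 'rV[C]_3) M : proj_eq u v -> proj_eq (u *m M) (v *m M).
Proof. by case=> c [c_neq0 ->]; exists c; rewrite -scalemxAl. Qed.

Lemma proj_eq_neq0 (u v : 'rV[C]_3) : proj_eq u v -> (u != 0) = (v != 0).
Proof. by case=> c [c_neq0 ->]; rewrite scaler_eq0 (negbTE c_neq0). Qed.

Lemma proj_eq_normalize (u : 'rV[C]_3) : proj_eq u (normalize u).
Proof.
rewrite /normalize; case: pickP => [i ui_neq0 | _]; last exact: proj_eq_refl.
by exists (u 0 i)^-1; rewrite invr_eq0.
Qed.

Lemma normalize_proj_eq (u v : 'rV[C]_3) : proj_eq u v -> normalize u = normalize v.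
Proof.
case=> c [c_neq0 ->]; rewrite /normalize.
have nz_cu : (fun i => (c *: u) 0 i != 0) =1 (fun i => u 0 i != 0).
  by move=> i; rewrite mxE mulf_eq0 (negbTE c_neq0).
rewrite (eq_pick nz_cu); case: pickP => [i _ | u0]; last first.
  suff -> : u = 0 by rewrite scaler0.
  by apply/rowP => j; move/negbFE/eqP: (u0 j) => ->; rewrite mxE.
by rewrite mxE scalerA invfM mulrAC mulVf // mul1r.
Qed.

Lemma proj_eq_of_normalize (u v : 'rV[C]_3) : normalize u = normalize v -> proj_eq u v.
Proof.
move=> uv; apply: proj_eq_trans (proj_eq_normalize u) _.
by rewrite uv; apply/proj_eq_sym/proj_eq_normalize.
Qed.

Lemma normalize_id (u : 'rV[C]_3) : normalize (normalize u) = normalize u.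
Proof. by apply/esym/normalize_proj_eq/proj_eq_normalize. Qed.

Section ProjectiveRepresentation.
Variables (gT : finGroupType) (G : {group gT}) (rho : gT -> 'M[C]_3).
Hypothesis rho_unit : forall g, g \in G -> rho g \in unitmx.
Hypothesis rho_mul : forall g h, g \in G -> h \in G ->
  exists c : C, c != 0 /\ rho (g * h)%g = c *: (rho g *m rho h).

Lemma rho1_scalar : exists2 c : C, c != 0 & rho 1%g = c%:M.
Proof.
have [c [c_neq0]] := rho_mul (group1 G) (group1 G); rewrite mulg1 => rho1E.
exists c^-1; first by rewrite invr_eq0.
have := congr1 (mulmx^~ (invmx (rho 1%g))) rho1E.
rewrite /= mulmxV ?rho_unit // -scalemxAl mulmxK ?rho_unit // => e.
by rewrite -[rho 1%g]scale1r -(mulVf c_neq0) -scalerA -e scale_scalar_mx mulr1.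
Qed.

Lemma proj_eq_rhoM (u : 'rV[C]_3) g h : g \in G -> h \in G ->
  proj_eq (u *m rho g *m rho h) (u *m rho (g * h)%g).
Proof.
move=> gG hG; have [c [c_neq0 ->]] := rho_mul gG hG.
by exists c; split; rewrite // -scalemxAr mulmxA.
Qed.

Definition pact (x : 'rV[C]_3) g := normalize (x *m rho g).

Lemma pact_normalize x g : pact (normalize x) g = pact x g.
Proof. by apply/esym/normalize_proj_eq/proj_eq_mulmx/proj_eq_normalize. Qed.

Lemma pactM x g h : g \in G -> h \in G -> pact (pact x g) h = pact x (g * h)%g.
Proof.
by move=> gG hG; rewrite pact_normalize; apply/normalize_proj_eq/proj_eq_rhoM.
Qed.

Lemma pact1 x : pact x 1%g = normalize x.
Proof.
rewrite /pact; have [c c_neq0 ->] := rho1_scalar; rewrite mul_mx_scalar.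
by apply/esym/normalize_proj_eq; exists c.
Qed.

Lemma proj_eq_of_pact x g : pact x g = normalize x -> proj_eq x (x *m rho g).
Proof. by move=> xg; apply/proj_eq_of_normalize; rewrite -xg. Qed.

Lemma porbitP v x : reflect (exists2 g, g \in G & x = pact v g) (x \in Defs.porbit G rho v).
Proof.
rewrite mem_undup; apply: (iffP mapP) => [[g] | [g gG ->]]; last by exists g; rewrite ?mem_enum.
by rewrite mem_enum; exists g.
Qed.

Lemma porbit_pact v x g : x \in Defs.porbit G rho v -> g \in G -> pact x g \in Defs.porbit G rho v.
Proof.
by case/porbitP=> h hG -> gG; apply/porbitP; exists (h * g)%g; rewrite ?groupM ?pactM.
Qed.

Lemma porbit_pact_trans v x y : x \in Defs.porbit G rho v -> y \in Defs.porbit G rho v ->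
  exists2 g, g \in G & y = pact x g.
Proof.
case/porbitP=> g gG -> /porbitP [h hG ->]; exists (g^-1 * h)%g; first by rewrite groupM ?groupV.
by rewrite pactM ?groupM ?groupV // mulKVg.
Qed.

Lemma porbit_normalize v x : x \in Defs.porbit G rho v -> normalize x = x.
Proof. by case/porbitP=> g _ ->; rewrite normalize_id. Qed.

Lemma porbit_proj_eq v x y : x \in Defs.porbit G rho v -> y \in Defs.porbit G rho v ->
  proj_eq x y -> x = y.
Proof.
by move=> xs ys /normalize_proj_eq; rewrite (porbit_normalize xs) (porbit_normalize ys).
Qed.

Lemma porbit_nth_proj_eq v x0 i j : (i < size (Defs.porbit G rho v))%N ->
  (j < size (Defs.porbit G rho v))%N ->
  proj_eq (nth x0 (Defs.porbit G rho v) i) (nth x0 (Defs.porbit G rho v) j) -> i = j.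
Proof.
move=> i_lt j_lt /(porbit_proj_eq (mem_nth _ i_lt) (mem_nth _ j_lt)) /eqP.
by rewrite nth_uniq ?undup_uniq // => /eqP.
Qed.

Lemma porbit_neq0 v x : v != 0 -> x \in Defs.porbit G rho v -> x != 0.
Proof.
move=> v_neq0 /porbitP [g gG ->]; rewrite -(proj_eq_neq0 (proj_eq_normalize _)).
by apply: contraNneq v_neq0 => vg0; rewrite -(mulmxK (rho_unit gG) v) vg0 mul0mx.
Qed.

Variables a b : gT.
Hypotheses (aG : a \in G) (bG : b \in G) (a2 : (a * a = 1)%g) (b2 : (b * b = 1)%g).
Hypothesis ab_comm : commute a b.
Hypothesis klein_normal :
  {in G & klein_triple a b, forall g k, (k ^ g)%g \in klein_triple a b}.

Lemma klein_tripleG k : k \in klein_triple a b -> k \in G.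
Proof. by rewrite !inE => /or3P [] /eqP ->; rewrite ?groupM. Qed.

Lemma porbit3_klein_fixed v : porbit_len G rho v = 3%N ->
  {in Defs.porbit G rho v & klein_triple a b, forall x k, pact x k = x}.
Proof.
move=> orbit3; set s := Defs.porbit G rho v.
have s_uniq : uniq s := undup_uniq _.
have pact_s k : k \in G -> {in s, forall x, pact x k \in s}.
  by move=> kG x xs; exact: porbit_pact.
have pact_invol k : k \in G -> (k * k = 1)%g -> {in s, involutive (pact^~ k)}.
  by move=> kG kk x xs; rewrite /= pactM // kk pact1 (porbit_normalize xs).
have [x0 x0s [x0a x0b]] : exists2 x0, x0 \in s & pact x0 a = x0 /\ pact x0 b = x0.
  apply: (commuting_involutions_fixed_point s_uniq orbit3 (pact_s a aG) (pact_invol a aG a2)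
    (pact_s b bG) (pact_invol b bG b2)).
  by move=> x xs; rewrite /= !pactM // ab_comm.
have x0_fixed k : k \in klein_triple a b -> pact x0 k = x0.
  by rewrite !inE => /or3P [] /eqP ->; rewrite -?pactM ?x0a ?x0b.
move=> x k xs k_klein; have [g gG ->] := porbit_pact_trans x0s xs.
have kg_klein : (k ^ g^-1)%g \in klein_triple a b by rewrite klein_normal ?groupV.
rewrite pactM ?(klein_tripleG k_klein) // conjgCV.
by rewrite -pactM ?(klein_tripleG kg_klein) // x0_fixed.
Qed.

Hypothesis rho_inj : forall g, g \in G -> (exists c : C, rho g = c%:M) -> g = 1%g.

Lemma rho_sqr_scalar g : g \in G -> (g * g = 1)%g ->
  exists2 s : C, s != 0 & rho g *m rho g = s%:M.
Proof.
move=> gG gg; have [c [c_neq0]] := rho_mul gG gG; have [d d_neq0 rho1] := rho1_scalar.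
rewrite gg rho1 => e; exists (c^-1 * d); first by rewrite mulf_neq0 ?invr_eq0.
by rewrite -scale_scalar_mx e scalerA mulVf // scale1r.
Qed.

Lemma rho_scalar_commute g h : g \in G -> h \in G -> commute g h ->
  exists c : C, rho g *m rho h = c *: (rho h *m rho g).
Proof.
move=> gG hG gh; have [c1 [c1_neq0 e1]] := rho_mul gG hG.
have [c2 [c2_neq0 e2]] := rho_mul hG gG; rewrite gh in e1.
by exists (c1^-1 * c2); rewrite -scalerA -e2 e1 scalerA mulVf // scale1r.
Qed.

Lemma rho_nscalar g : g \in G -> g != 1%g -> forall c : C, rho g != c%:M.
Proof.
by move=> gG g_neq1 c; apply: contraNneq g_neq1 => rg; apply/eqP/rho_inj => //; exists c.
Qed.

Lemma rhoM_nscalar g h : g \in G -> h \in G -> (g * h != 1)%g ->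
  forall c : C, rho g *m rho h != c%:M.
Proof.
move=> gG hG gh_neq1 c; apply: contraNneq gh_neq1 => rgh.
have [d [d_neq0 e]] := rho_mul gG hG; apply/eqP/rho_inj; first exact: groupM.
by exists (d * c); rewrite e rgh scale_scalar_mx.
Qed.

Hypotheses (a_neq1 : a != 1%g) (b_neq1 : b != 1%g) (ab_neq1 : (a * b != 1)%g).

Lemma klein_fixed_four_points (u : 'I_4 -> 'rV[C]_3) : (forall i, u i != 0) ->
  (forall i, proj_eq (u i) (u i *m rho a)) -> (forall i, proj_eq (u i) (u i *m rho b)) ->
  exists i j, i != j /\ exists c, u j = c *: u i.
Proof.
move=> u_neq0 ua ub.
have [sa sa_neq0 A2] := rho_sqr_scalar aG a2; have [sb sb_neq0 B2] := rho_sqr_scalar bG b2.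
have eigen i : exists e : C * C, joint_eigenvector (rho a) (rho b) (u i) e.1 e.2.
  by have [[x [_ uA]] [y [_ uB]]] := (ua i, ub i); exists (x, y).
have [e u_eigen] := fin_all_exists eigen.
have AB_comm : rho a *m rho b = rho b *m rho a.
  have [c AB] := rho_scalar_commute aG bG ab_comm.
  have [[x [x_neq0 uA]] [y [y_neq0 uB]]] := (ua o0, ub o0).
  exact: commute_of_scalar_commute AB (u_neq0 o0) uA uB (mulf_neq0 x_neq0 y_neq0).
apply: (four_joint_eigenvectors _ AB_comm A2 B2 sa_neq0 sb_neq0 _ _ _ _ u_eigen) => //.
- by rewrite pnatr_eq0.
- exact: rho_nscalar.
- exact: rho_nscalar.
- exact: rhoM_nscalar.
Qed.

Lemma porbit3_unique v w : v != 0 -> w != 0 ->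
  porbit_len G rho v = 3%N -> porbit_len G rho w = 3%N ->
  exists g, g \in G /\ proj_eq w (v *m rho g).
Proof.
move=> v_neq0 w_neq0 v3 w3; set s := Defs.porbit G rho v.
have w_fixed k : k \in klein_triple a b -> proj_eq w (w *m rho k).
  move=> k_klein; apply: proj_eq_of_pact; rewrite -pact_normalize.
  by apply: (porbit3_klein_fixed w3) k_klein; rewrite -pact1; apply/porbitP; exists 1%g.
pose u (i : 'I_4) := nth w s i.
have size_s : size s = 3 := v3.
have uP i : u i = w \/ u i \in s.
  rewrite /u; case: (ltnP i 3) => i3; first by right; rewrite mem_nth ?size_s.
  by left; rewrite nth_default ?size_s.
have u_fixed k i : k \in klein_triple a b -> proj_eq (u i) (u i *m rho k).
  move=> k_klein; case: (uP i) => [-> | us]; first exact: w_fixed.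
  by apply: proj_eq_of_pact; rewrite (porbit3_klein_fixed v3) ?(porbit_normalize us).
have u_neq0 i : u i != 0 by case: (uP i) => [-> | /(porbit_neq0 v_neq0)].
have [a_klein b_klein] : a \in klein_triple a b /\ b \in klein_triple a b.
  by rewrite !inE !eqxx orbT.
have [i [j [i_neq_j [c uij]]]] :=
  klein_fixed_four_points u_neq0 (u_fixed a^~ a_klein) (u_fixed b^~ b_klein).
have {c uij} pij : proj_eq (u i) (u j).
  by exists c; split=> //; apply: contraNneq (u_neq0 j) => c0; rewrite uij c0 scale0r.
wlog i_lt_j : i j i_neq_j pij / (i < j)%N.
  move=> wlog; have [ij | ji | ij] := ltngtP i j.
  - exact: wlog pij ij.
  - by apply: wlog (proj_eq_sym pij) ji; rewrite eq_sym.
  - by rewrite (val_inj ij) eqxx in i_neq_j.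
have i_lt3 : (i < 3)%N := leq_trans i_lt_j (ltn_ord j).
have ui_s : u i \in s by rewrite /u mem_nth ?size_s.
case: (ltnP j 3) => j3.
  by case/eqP: i_neq_j; apply/val_inj/(porbit_nth_proj_eq _ _ pij); rewrite size_s.
have uj_w : u j = w by rewrite /u nth_default ?size_s.
case/porbitP: ui_s => g gG ui; exists g; split=> //.
rewrite -uj_w; apply/proj_eq_sym/(proj_eq_trans _ pij).
by rewrite ui; exact: proj_eq_normalize.
Qed.

End ProjectiveRepresentation.

Theorem lemma4p2 (gT : finGroupType) (G : {group gT}) (rho : gT -> 'M[C]_3)
  (rho_unit : forall g, g \in G -> rho g \in unitmx)
  (rho_mul : forall g h, g \in G -> h \in G ->
     exists c : C, c != 0 /\ rho (g * h)%g = c *: (rho g *m rho h))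
  (rho_inj : forall g, g \in G -> (exists c : C, rho g = c%:M) -> g = 1%g)
  (HG : (G \isog 'Sym_('I_4))%g \/ (G \isog 'Alt_('I_4))%g) :
  (exists v : 'rV[C]_3, v != 0 /\ forall g, g \in G -> proj_eq v (v *m rho g))
  \/
  (forall v w : 'rV[C]_3, v != 0 -> w != 0 ->
     porbit_len G rho v = 3%N -> porbit_len G rho w = 3%N ->
     exists g, g \in G /\ proj_eq w (v *m rho g)).
Proof.
right; have [a [b [[aG bG a2 b2 ab] [a_neq1 b_neq1 ab_neq1 klein_normal]]]] := klein_four_normal HG.
by move=> v w; apply: (porbit3_unique rho_unit rho_mul aG bG a2 b2 ab klein_normal rho_inj).
Qed.
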